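(* Let $R$ be any commutative ring with $1$, $n$ a positive integer, $r,s$ nonnegative integers, $V=R^n$, $G=GL_n(R)$. Let $\sigma_{r+s}:R\mathfrak{S}_{r+s}\to\mathrm{End}_G(V^{\otimes r+s})$ and $\sigma_{r,s}:\mathfrak{B}_{r,s}^n\to\mathrm{End}_G(V^{\otimes r}\otimes {V^*}^{\otimes s})$ be the representation maps described in the context. Then: (1) $\sigma_{r,s}$ is surjective if and only if $\sigma_{r+s}$ is surjective; (2) the action of $\mathfrak{B}_{r,s}^n$ on $V^{\otimes r}\otimes {V^*}^{\otimes s}$ is faithful if and only if $n\ge r+s$; (3) the annihilator of $\mathfrak{B}_{r,s}^n$ on $V^{\otimes r}\otimes {V^*}^{\otimes s}$ is free over $R$ if and only if the annihilator of $R\mathfrak{S}_{r+s}$ on $V^{\otimes r+s}$ is free over $R$, and if so they have the same rank.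
   Context: $G=GL_n(R)$ acts naturally on $V=R^n$ (basis $v_1,\dots,v_n$), on $V^*$ by $(gf)(v)=f(g^{-1}v)$, and diagonally on tensor products. A Brauer $m$-diagram is a graph with $m$ vertices in a top row, $m$ in a bottom row and $m$ edges, each vertex lying on exactly one edge. The Brauer algebra $\mathfrak{B}_m^n$ is the free $R$-module on Brauer $m$-diagrams with product $d_1d_2=n^kd_3$, where $d_3$ is obtained by stacking $d_1$ above $d_2$, identifying the bottom row of $d_1$ with the top row of $d_2$, and removing the middle vertices and the $k$ closed cycles. An edge is propagating if its endpoints lie in different rows; totally propagating diagrams span a copy of $R\mathfrak{S}_m$. With $m=r+s$, let $F$ be the first $r$ vertices of each row and $L$ the last $s$. The walled Brauer algebra $\mathfrak{B}_{r,s}^n$ is the $R$-span of diagrams in which every propagating edge has both endpoints in $F$ or both in $L$, and every non-propagating edge has one endpoint in $F$ and one in $L$. A Brauer diagram $d$ acts from the right on $V_1\otimes\cdots\otimes V_m$ (each $V_k\in\{V,V^*\}$, with $V^*$ identified with $V$ via $v_i\mapsto v_i^*$, basis $x_{i_1}\otimes\cdots\otimes x_{i_m}$ indexed by $\mathbf i\in\{1,\dots,n\}^m$) via the matrix $(a_{\mathbf i,\mathbf j})$: write the entries of $\mathbf i$ along the top row and of $\mathbf j$ along the bottom row; $a_{\mathbf i,\mathbf j}=1$ if both ends of every edge carry the same index, and $0$ otherwise. This gives $\sigma_{r+s}$ (action of $R\mathfrak{S}_{r+s}$ on $V^{\otimes r+s}$) and $\sigma_{r,s}$ (action of $\mathfrak{B}_{r,s}^n$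 on $V^{\otimes r}\otimes {V^*}^{\otimes s}$), both with image commuting with $G$. *)

From HB Require Import structures.
From mathcomp Require Import all_boot all_order all_algebra.
Set Implicit Arguments. Unset Strict Implicit. Unset Printing Implicit Defensive.
Import GRing.Theory.
Local Open Scope ring_scope.

(* Vertices: (true, k) = k-th vertex of the top row,
             (false, k) = k-th vertex of the bottom row. *)
Definition vertex (m : nat) := (bool * 'I_m)%type.

(* A Brauer diagram is a perfect matching of the 2m vertices, encoded as the
   fixed-point-free involution sending each vertex to the other end of its edge. *)
Definition is_brauer (m : nat) (f : {ffun vertex m -> vertex m}) : bool :=
  [forall x, (f (f x) == x) && (f x != x)].

Definition diagram (m : nat) := {f : {ffun vertex m -> vertex m} | is_brauer f}.

Definition partner (m : nat) (d : diagram m) (x : vertex m) : vertex m := (val d) x.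

Definition propagating (m : nat) (d : diagram m) (x : vertex m) : bool :=
  x.1 != (partner d x).1.

(* totally propagating diagrams (span the copy of R S_m) *)
Definition perm_diagram (m : nat) (d : diagram m) : bool :=
  [forall x, propagating d x].

Definition in_F (m r : nat) (x : vertex m) : bool := (x.2 < r)%N.

Definition walled (m r : nat) (d : diagram m) : bool :=
  [forall x, if propagating d x then in_F r x == in_F r (partner d x)
             else in_F r x != in_F r (partner d x)].

(* basis x_i indexed by i in {1..n}^m *)
Definition idx (m n : nat) := {ffun 'I_m -> 'I_n}.

(* Endomorphisms of the free module with basis (x_i)_{i : idx m n} are given by
   matrices E : idx m n -> idx m n -> R, with the convention (matching the
   right action of diagrams) that E sends x_i to  sum_j E i j x_j. *)

Definition label (m n : nat) (i j : idx m n) (x : vertex m) : 'I_n :=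
  if x.1 then i x.2 else j x.2.

Definition diag_mx (R : comNzRingType) (m n : nat) (d : diagram m)
    (i j : idx m n) : R :=
  if [forall x, label i j (partner d x) == label i j x] then 1 else 0.

Notation brauer_elt R m := {ffun diagram m -> GRing.ComNzRing.sort R}.

(* support condition: x lies in the R-span of the diagrams satisfying P *)
Definition supported (R : comNzRingType) (m : nat) (P : pred (diagram m))
    (x : brauer_elt R m) : Prop :=
  forall d, ~~ P d -> x d = 0.

Definition sigma (R : comNzRingType) (m n : nat) (x : brauer_elt R m)
    (i j : idx m n) : R :=
  \sum_(d : diagram m) x d * diag_mx R d i j.

(* g in GL_n(R) with inverse h.  On V_1 ⊗...⊗ V_m where the first p factors
   are V and the remaining m - p are V^*:  g x_i = sum_j rho i j x_j with
   rho i j = prod_{k<p} g(j_k, i_k) * prod_{k>=p} h(i_k, j_k)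
   (g v_b = sum_a g(a,b) v_a and g v_b^* = sum_a h(b,a) v_a^* ). *)
Definition rho (R : comNzRingType) (m n p : nat) (g h : 'M[R]_n)
    (i j : idx m n) : R :=
  \prod_(k < m) (if (k < p)%N then g (j k) (i k) else h (i k) (j k)).

Definition commutes (R : comNzRingType) (m n : nat)
    (E P : idx m n -> idx m n -> R) : Prop :=
  forall i j, \sum_(k : idx m n) E i k * P k j = \sum_(k : idx m n) P i k * E k j.

Definition End_G (R : comNzRingType) (m n p : nat)
    (E : idx m n -> idx m n -> R) : Prop :=
  forall g h : 'M[R]_n, g *m h = 1%:M -> h *m g = 1%:M ->
    commutes E (rho p g h).

Definition sigma_surj (R : comNzRingType) (m n p : nat) (P : pred (diagram m)) : Prop :=
  forall E : idx m n -> idx m n -> R, End_G p E ->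
    exists x : brauer_elt R m, supported P x /\ forall i j, sigma x i j = E i j.

Definition ann (R : comNzRingType) (m n : nat) (P : pred (diagram m))
    (x : brauer_elt R m) : Prop :=
  supported P x /\ forall i j : idx m n, sigma x i j = 0.

Definition free_of_rank (R : comNzRingType) (D : finType)
    (S : {ffun D -> R} -> Prop) (k : nat) : Prop :=
  exists b : 'I_k -> {ffun D -> R},
    (forall l, S (b l)) /\
    (forall c : 'I_k -> R,
        (forall d, \sum_(l < k) c l * b l d = 0) -> forall l, c l = 0) /\
    (forall x, S x -> exists c : 'I_k -> R,
        forall d, x d = \sum_(l < k) c l * b l d).

(* Reflecting every vertex to the right of the wall into the other row (partial
   transposition) is a bijection from walled Brauer diagrams onto permutation
   diagrams.  On matrices it transposes the [s] dual tensor factors, and it turns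
   conjugation by [g] acting on V^{⊗r} ⊗ V*^{⊗s} (where [g^-1] acts transposed on
   the duals) into conjugation by [g] acting on V^{⊗r+s}.  So it identifies the
   commutants, the images and the annihilators of the two algebras: this gives (1)
   and (3), ranks of free modules over a commutative ring being unique by the
   determinant argument, and reduces (2) to the symmetric group.  There, for
   [r + s <= n] an injective multi-index separates permutations, while for
   [n < r + s] the antisymmetrizer acts by determinants with two equal rows. *)

From Pilot Require Import Defs.
From HB Require Import structures.
From mathcomp Require Import all_boot all_order all_algebra all_fingroup.
From Stdlib Require Import FunctionalExtensionality.
Set Implicit Arguments. Unset Strict Implicit. Unset Printing Implicit Defensive.
Import GRing.Theory.
Local Open Scope ring_scope.

Lemma partnerK m (d : diagram m) : involutive (partner d).
Proof. by move=> x; have /forallP/(_ x)/andP[/eqP] := valP d. Qed.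

Lemma perm_diagram_partner m (d : diagram m) x :
  perm_diagram d -> (partner d x).1 = ~~ x.1.
Proof.
by move=> /forallP/(_ x); rewrite /propagating; case: x.1 (partner d x).1 => [] [].
Qed.

Section PartialTranspose.
Variables (m r : nat).

Definition flip_wall (x : vertex m) : vertex m :=
  if (x.2 < r)%N then x else (~~ x.1, x.2).

Lemma flip_wallK : involutive flip_wall.
Proof.
by case=> b k; rewrite /flip_wall /=; case hk: (k < r)%N => /=; rewrite ?hk ?negbK.
Qed.

Lemma ptrans_brauer (f : {ffun vertex m -> vertex m}) :
  is_brauer f -> is_brauer [ffun x => flip_wall (f (flip_wall x))].
Proof.
move=> /forallP fP; apply/forallP => x; rewrite !ffunE flip_wallK.
have /andP[/eqP -> fx_neq] := fP (flip_wall x); rewrite flip_wallK eqxx /=.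
by apply: contra fx_neq => /eqP/(congr1 flip_wall); rewrite !flip_wallK => ->.
Qed.

Definition ptrans (d : diagram m) : diagram m :=
  exist (@is_brauer m) _ (ptrans_brauer (valP d)).

Lemma partner_ptrans d x : partner (ptrans d) x = flip_wall (partner d (flip_wall x)).
Proof. by rewrite /partner /= ffunE. Qed.

Lemma ptransK : involutive ptrans.
Proof. by move=> d; apply: val_inj; apply/ffunP => x; rewrite !ffunE !flip_wallK. Qed.

Lemma walled_ptrans d : walled r d = perm_diagram (ptrans d).
Proof.
apply/forallP/forallP => dP x; last move: (dP (flip_wall x)).
  rewrite -[x]flip_wallK; move: (flip_wall x) => {}x; move: (dP x).
all: rewrite /propagating partner_ptrans ?flip_wallK /in_F /flip_wall.
all: case: x (partner d x) => [b k] [b' k'] /=.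
all: by case: b b' (k < r)%N (k' < r)%N => [] [] [] [].
Qed.

Variable n : nat.

Definition mix_idx (i j : idx m n) : idx m n :=
  [ffun k : 'I_m => if (k < r)%N then i k else j k].

Lemma mix_idxK i j : mix_idx (mix_idx i j) (mix_idx j i) = i.
Proof. by apply/ffunP => k; rewrite !ffunE; case: ifP => ->. Qed.

Lemma label_flip_wall i j x :
  label i j (flip_wall x) = label (mix_idx i j) (mix_idx j i) x.
Proof.
by case: x => b k; rewrite /label /flip_wall /= !ffunE; case: (k < r)%N; case: b.
Qed.

Variable R : comNzRingType.

Lemma diag_mx_ptrans d i j :
  Defs.diag_mx R (ptrans d) i j = Defs.diag_mx R d (mix_idx i j) (mix_idx j i).
Proof.
rewrite /Defs.diag_mx; congr (if _ then _ else _); apply/forallP/forallP => dP x.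
  by move: (dP (flip_wall x)); rewrite partner_ptrans flip_wallK !label_flip_wall.
by move: (dP (flip_wall x)); rewrite -!label_flip_wall flip_wallK partner_ptrans.
Qed.

Definition ptrans_elt (x : brauer_elt R m) : brauer_elt R m := [ffun d => x (ptrans d)].

Lemma ptrans_eltK : involutive ptrans_elt.
Proof. by move=> x; apply/ffunP => d; rewrite !ffunE ptransK. Qed.

Lemma sigma_ptrans x i j :
  sigma (ptrans_elt x) i j = sigma x (mix_idx i j) (mix_idx j i).
Proof.
rewrite /sigma (reindex_inj (can_inj ptransK)) /=.
by apply: eq_bigr => d _; rewrite ffunE ptransK diag_mx_ptrans.
Qed.

Lemma supported_ptrans x :
  supported (walled r) x <-> supported (@perm_diagram m) (ptrans_elt x).
Proof.
split=> xP d dP; first by rewrite ffunE xP // walled_ptrans ptransK.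
by have := xP (ptrans d); rewrite ffunE ptransK -walled_ptrans; apply.
Qed.

Lemma ann_ptrans x :
  ann n (walled r) x <-> ann n (@perm_diagram m) (ptrans_elt x).
Proof.
split=> -[/supported_ptrans xs x0]; split=> // i j.
  by rewrite sigma_ptrans x0.
by have := x0 (mix_idx i j) (mix_idx j i); rewrite sigma_ptrans !mix_idxK.
Qed.

End PartialTranspose.

Section Equivariance.
Variables (R : comNzRingType) (m n : nat).
Local Notation endo := (idx m n -> idx m n -> R).

Definition mulend (A B : endo) : endo := fun i j => \sum_k A i k * B k j.
Definition idend : endo := fun i j => (i == j)%:R.

Lemma mulendA (A B C : endo) : mulend (mulend A B) C = mulend A (mulend B C).
Proof.
do 2!apply: functional_extensionality => ?; rewrite /mulend.
under eq_bigr do rewrite mulr_suml; under [RHS]eq_bigr do rewrite mulr_sumr.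
by rewrite exchange_big; apply: eq_bigr => k _; apply: eq_bigr => l _; rewrite mulrA.
Qed.

Lemma mul1end (A : endo) : mulend idend A = A.
Proof.
apply: functional_extensionality => i; apply: functional_extensionality => j.
rewrite /mulend /idend (bigD1 i) //=.
by rewrite eqxx mul1r big1 ?addr0 // => k; rewrite eq_sym => /negbTE->; rewrite mul0r.
Qed.

Lemma sum_tensor_delta (c d : 'I_m -> 'I_n -> 'I_n -> R) :
    (forall t a b, \sum_e c t a e * d t e b = (a == b)%:R) ->
  forall i j : idx m n,
    \sum_(k : idx m n) (\prod_t c t (i t) (k t)) * (\prod_t d t (k t) (j t))
    = (i == j)%:R.
Proof.
move=> cd i j; under eq_bigr do rewrite -big_split /=.
rewrite -(bigA_distr_bigA (fun t e => c t (i t) e * d t e (j t))) /=.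
under eq_bigr do rewrite cd.
have [<-|ij] := eqVneq i j; first by rewrite big1 // => t _; rewrite eqxx.
have /existsP[t /negbTE ijt] : [exists t, i t != j t].
  by apply: contraNT ij => /existsPn ij; apply/eqP/ffunP => t; apply/eqP/negPn.
by rewrite (bigD1 t) //= ijt mul0r.
Qed.

Lemma rho_mulV p (g h : 'M[R]_n) :
  h *m g = 1%:M -> mulend (rho p g h) (rho p h g) = idend.
Proof.
move=> hg; have hgE a b : \sum_e h a e * g e b = (a == b)%:R.
  by have := congr1 (fun M : 'M[R]_n => M a b) hg; rewrite !mxE.
do 2!apply: functional_extensionality => ?; rewrite /mulend /rho /idend.
apply: (sum_tensor_delta (c := fun t a e => if (t < p)%N then g e a else h a e)
                         (d := fun t e b => if (t < p)%N then h b e else g e b)).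
move=> t a b /=; case: (t < p)%N; last exact: hgE.
by under eq_bigr do rewrite mulrC; rewrite hgE eq_sym.
Qed.

Definition conjend p (g h : 'M[R]_n) (E : endo) : endo :=
  fun i j => \sum_k \sum_l rho p h g i k * E k l * rho p g h l j.

Lemma conjendE p g h E : conjend p g h E = mulend (mulend (rho p h g) E) (rho p g h).
Proof.
apply: functional_extensionality => i; apply: functional_extensionality => j.
rewrite /conjend /mulend.
under [RHS]eq_bigr do rewrite mulr_suml.
by rewrite exchange_big.
Qed.

Lemma commutesE (E P : endo) : commutes E P <-> mulend E P = mulend P E.
Proof.
split=> [EP | EP i j]; last exact: (congr1 (fun F => F i j) EP).
by do 2!apply: functional_extensionality => ?; apply: EP.
Qed.

Lemma commutes_rhoE p (g h : 'M[R]_n) E : g *m h = 1%:M -> h *m g = 1%:M ->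
  commutes E (rho p g h) <-> conjend p g h E = E.
Proof.
move=> gh hg; rewrite conjendE; split=> [/commutesE EP | EC].
  by rewrite mulendA EP -mulendA rho_mulV // mul1end.
by apply/commutesE; rewrite -{2}EC -!mulendA rho_mulV // mul1end.
Qed.

Variable r : nat.

Definition ptrans_end (E : endo) : endo :=
  fun i j => E (mix_idx r i j) (mix_idx r j i).

Lemma ptrans_endK : involutive ptrans_end.
Proof.
by move=> E; do 2!apply: functional_extensionality => ?; rewrite /ptrans_end !mix_idxK.
Qed.

(* Partial transposition turns the inverse matrices acting on the dual factors
   into the matrices acting on the corresponding factors of V. *)
Lemma rho_mix (g h : 'M[R]_n) (i j k l : idx m n) :
  rho r h g (mix_idx r i j) (mix_idx r k l) * rho r g h (mix_idx r l k) (mix_idx r j i)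
  = rho m h g i k * rho m g h l j.
Proof.
rewrite /rho -!big_split; apply: eq_bigr => t _; rewrite !ffunE ltn_ord.
by case: (t < r)%N => /=; rewrite mulrC.
Qed.

Lemma ptrans_conjend g h E :
  ptrans_end (conjend r g h E) = conjend m g h (ptrans_end E).
Proof.
apply: functional_extensionality => i; apply: functional_extensionality => j.
rewrite /ptrans_end /conjend.
pose mix2 (kl : idx m n * idx m n) := (mix_idx r kl.1 kl.2, mix_idx r kl.2 kl.1).
have mix2K : involutive mix2 by case=> k l; rewrite /mix2 /= !mix_idxK.
rewrite !pair_bigA /= (reindex_inj (can_inj mix2K)) /=.
by apply: eq_bigr => -[k l] _; rewrite mulrAC rho_mix mulrAC.
Qed.

Lemma End_G_ptrans E : End_G r E <-> End_G m (ptrans_end E).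
Proof.
split=> EG g h gh hg; apply/(commutes_rhoE _ _ gh hg);
  move/(commutes_rhoE _ _ gh hg): (EG g h gh hg).
  by rewrite -ptrans_conjend => ->.
by rewrite -ptrans_conjend => /(congr1 ptrans_end); rewrite !ptrans_endK.
Qed.

End Equivariance.

Section FreeRank.
Variables (R : comNzRingType) (D : finType).
Implicit Types (S : {ffun D -> R} -> Prop) (k : nat).

Lemma free_of_rank_le S k1 k2 : free_of_rank S k1 -> free_of_rank S k2 -> (k1 <= k2)%N.
Proof.
move=> [b1 [Sb1 [free1 span1]]] [b2 [Sb2 [_ span2]]].
have [c cE] := fin_all_exists (fun l => span2 _ (Sb1 l)).
have [e eE] := fin_all_exists (fun q => span1 _ (Sb2 q)).
have ceE l d : \sum_p (\sum_q c l q * e q p) * b1 p d = b1 l d.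
  rewrite cE; under eq_bigr do rewrite mulr_suml.
  rewrite exchange_big; apply: eq_bigr => q _; rewrite eE mulr_sumr.
  by apply: eq_bigr => p _; rewrite mulrA.
apply: (@mulmx1_min _ _ _ (\matrix_(l, q) c l q) (\matrix_(q, p) e q p)).
apply/matrixP => l p; rewrite !mxE; under eq_bigr do rewrite !mxE.
apply/eqP; rewrite -subr_eq0; apply/eqP; move: p.
apply: (free1 (fun p => \sum_q c l q * e q p - (l == p)%:R)) => d.
under eq_bigr do rewrite mulrBl; rewrite sumrB ceE (bigD1 l) //= eqxx mul1r.
by rewrite big1 ?addr0 ?subrr // => p; rewrite eq_sym => /negbTE->; rewrite mul0r.
Qed.

Lemma free_of_rank_comp S S' (t : D -> D) k : involutive t ->
    (forall x, S x <-> S' [ffun d => x (t d)]) ->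
  free_of_rank S k <-> free_of_rank S' k.
Proof.
move=> tK; have compK (x : {ffun D -> R}) : [ffun d => [ffun d' => x (t d')] (t d)] = x.
  by apply/ffunP => d; rewrite !ffunE tK.
have transfer S1 S2 : (forall x, S1 x <-> S2 [ffun d => x (t d)]) ->
    free_of_rank S1 k -> free_of_rank S2 k.
  move=> S12 [b [Sb [free_b span_b]]].
  exists (fun l => [ffun d => b l (t d)]); split; first by move=> l; apply/S12/Sb.
  split=> [c c0 l | x S2x].
    apply: free_b => d; rewrite -[RHS](c0 (t d)).
    by apply: eq_bigr => l' _; rewrite ffunE tK.
  have /span_b[c cE] : S1 [ffun d => x (t d)] by apply/S12; rewrite compK.
  by exists c => d; rewrite -[x]compK ffunE cE; apply: eq_bigr => l _; rewrite ffunE.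
move=> SS'; split; apply: transfer => // x.
by rewrite -[X in S' X]compK; apply: iff_sym.
Qed.

End FreeRank.

Section PermutationDiagrams.
Variable m : nat.

Definition diagram_of_perm_fun (s : 'S_m) : {ffun vertex m -> vertex m} :=
  [ffun x : vertex m => if x.1 then (false, s x.2) else (true, (s^-1)%g x.2)].

Lemma diagram_of_perm_brauer s : is_brauer (diagram_of_perm_fun s).
Proof. by apply/forallP => -[[] k]; rewrite !ffunE /= ?permK ?permKV eqxx. Qed.

Definition diagram_of_perm s : diagram m :=
  exist (@is_brauer m) _ (diagram_of_perm_brauer s).

Lemma partner_diagram_of_perm s x :
  partner (diagram_of_perm s) x = if x.1 then (false, s x.2) else (true, (s^-1)%g x.2).
Proof. by rewrite /partner /= ffunE. Qed.

Lemma diagram_of_perm_inj : injective diagram_of_perm.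
Proof.
move=> s1 s2 /(congr1 (fun d => partner d (true, _))) s12; apply/permP => k.
by have := s12 k; rewrite !partner_diagram_of_perm => -[].
Qed.

Lemma perm_diagramP d : reflect (exists s, d = diagram_of_perm s) (perm_diagram d).
Proof.
apply: (iffP idP) => [dP | [s ->]]; last first.
  by apply/forallP => -[[] k]; rewrite /propagating partner_diagram_of_perm.
pose f k := (partner d (true, k)).2.
have partner_top k : partner d (true, k) = (false, f k).
  by rewrite /f; case: (partner d _) (perm_diagram_partner (true, k) dP) => ? ? /= ->.
have f_inj : injective f.
  move=> k1 k2 fk; have := partnerK d (true, k1).
  by rewrite partner_top fk -partner_top partnerK => -[].
exists (perm f_inj); apply: val_inj; apply/ffunP => -[[] k]; rewrite ffunE /=.
  by rewrite permE; apply: partner_top.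
change (partner d (false, k) = (true, (perm f_inj)^-1 k))%g.
by rewrite -{1}(permKV (perm f_inj) k) permE -partner_top partnerK.
Qed.

Variables (R : comNzRingType) (n : nat).

Lemma diag_mx_perm s (i j : idx m n) :
  Defs.diag_mx R (diagram_of_perm s) i j = [forall k, i k == j (s k)]%:R.
Proof.
rewrite /Defs.diag_mx.
suff -> : [forall x, label i j (partner (diagram_of_perm s) x) == label i j x]
  = [forall k, i k == j (s k)] by case: [forall k, _].
apply/forallP/forallP => ijP.
  by move=> k; have := ijP (true, k); rewrite partner_diagram_of_perm eq_sym.
case=> -[] k; rewrite partner_diagram_of_perm /label /=; first by rewrite eq_sym.
by have := ijP ((s^-1)%g k); rewrite permKV.
Qed.

Lemma sigma_perm_supported (x : brauer_elt R m) (i j : idx m n) :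
    supported (@perm_diagram m) x ->
  sigma x i j = \sum_s x (diagram_of_perm s) * [forall k, i k == j (s k)]%:R.
Proof.
move=> xP; rewrite /sigma (bigID (@perm_diagram m)) /=.
rewrite [X in _ + X]big1 => [|d /xP->]; last by rewrite mul0r.
have -> : \sum_(d | perm_diagram d) x d * Defs.diag_mx R d i j =
          \sum_(d in diagram_of_perm @: [set: 'S_m]) x d * Defs.diag_mx R d i j.
  by apply: eq_bigl => d; apply/perm_diagramP/imsetP => -[s]; exists s.
rewrite addr0 big_imset /=; last by move=> ? ? _ _; apply: diagram_of_perm_inj.
by apply: eq_big => [s | s _]; rewrite ?inE ?diag_mx_perm.
Qed.

Lemma perm_faithful : (m <= n)%N ->
  forall x : brauer_elt R m, ann n (@perm_diagram m) x -> x = 0.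
Proof.
move=> le_mn x [xP x0]; apply/ffunP => d; rewrite ffunE.
have [/perm_diagramP[s0 ->] | /xP //] := boolP (perm_diagram d).
pose i : idx m n := [ffun k => widen_ord le_mn k].
have i_inj : injective i by move=> k1 k2; rewrite !ffunE => /(congr1 val) /= /val_inj.
pose j : idx m n := [ffun l => i ((s0^-1)%g l)].
have ijE (s : 'S_m) : [forall k, i k == j (s k)] = (s == s0).
  apply/forallP/eqP => [ijs | ->]; last by move=> k; rewrite [j _]ffunE permK.
  apply/permP => k; apply: (canRL (permKV s0)); apply: i_inj.
  by rewrite (eqP (ijs k)) [j _]ffunE.
rewrite -(x0 i j) sigma_perm_supported // (bigD1 s0) //= big1 ?addr0.
  by rewrite ijE eqxx mulr1.
by move=> s /negbTE s_neq; rewrite ijE s_neq mulr0.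
Qed.

Lemma prodr_natb (I : finType) (b : pred I) : \prod_i (b i)%:R = [forall i, b i]%:R :> R.
Proof.
have [bT | /forallPn[i /negbTE bi]] := boolP [forall i, b i].
  by rewrite big1 // => i _; rewrite (forallP bT).
by rewrite (bigD1 i) //= bi mul0r.
Qed.

Definition antisymmetrizer : brauer_elt R m :=
  [ffun d => \sum_(s | diagram_of_perm s == d) (-1) ^+ s].

Lemma antisymmetrizer_perm s : antisymmetrizer (diagram_of_perm s) = (-1) ^+ s.
Proof.
by rewrite ffunE (big_pred1 s) // => s'; rewrite /= (inj_eq diagram_of_perm_inj).
Qed.

Lemma antisymmetrizer_supported : supported (@perm_diagram m) antisymmetrizer.
Proof.
move=> d dP; rewrite ffunE big_pred0 // => s.
by apply: contraNF dP => /eqP <-; apply/perm_diagramP; exists s.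
Qed.

(* [sigma antisymmetrizer i j] is a determinant with two equal rows once the
   multi-index [i] repeats a value, which it must when [n < m]. *)
Lemma sigma_antisymmetrizer (i j : idx m n) :
  sigma antisymmetrizer i j = \det (\matrix_(k, l) (i k == j l)%:R).
Proof.
rewrite sigma_perm_supported; last exact: antisymmetrizer_supported.
apply: eq_bigr => s _; rewrite antisymmetrizer_perm -prodr_natb.
by congr (_ * _); apply: eq_bigr => k _; rewrite mxE.
Qed.

Lemma perm_not_faithful : (n < m)%N ->
  exists2 x : brauer_elt R m, ann n (@perm_diagram m) x & x != 0.
Proof.
move=> lt_nm; exists antisymmetrizer.
  split=> [|i j]; first exact: antisymmetrizer_supported.
  have /injectivePn[k1 [k2 k12 ik12]] : ~~ injectiveb i.
    by apply: contraTN lt_nm => /injectiveP/leq_card; rewrite !card_ord -leqNgt.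
  rewrite sigma_antisymmetrizer (determinant_alternate k12) // => l.
  by rewrite !mxE ik12.
apply/eqP => /ffunP/(_ (diagram_of_perm 1%g)).
by rewrite antisymmetrizer_perm odd_perm1 ffunE => /eqP; rewrite oner_eq0.
Qed.

Lemma perm_faithfulP :
  (forall x : brauer_elt R m, ann n (@perm_diagram m) x -> x = 0) <-> (m <= n)%N.
Proof.
split=> [faithful | /perm_faithful //]; rewrite leqNgt; apply/negP.
by case/perm_not_faithful=> x /faithful ->; rewrite eqxx.
Qed.

End PermutationDiagrams.

Section Transfer.
Variables (R : comNzRingType) (m r n : nat).

Lemma sigma_surj_ptrans :
  sigma_surj R n r (@walled m r) <-> sigma_surj R n m (@perm_diagram m).
Proof.
have transfer p p' (P P' : pred (diagram m)) :
    (forall E : idx m n -> idx m n -> R, End_G p' E -> End_G p (ptrans_end r E)) ->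
    (forall x : brauer_elt R m, supported P x -> supported P' (ptrans_elt r x)) ->
  sigma_surj R n p P -> sigma_surj R n p' P'.
  move=> EG supp surj E /(EG E) /(surj _)[x [xP xE]]; exists (ptrans_elt r x).
  by split=> [|i j]; [apply: supp | rewrite sigma_ptrans xE /ptrans_end !mix_idxK].
split; apply: transfer.
- by move=> E EG; apply/End_G_ptrans; rewrite ptrans_endK.
- by move=> x /supported_ptrans.
- by move=> E /End_G_ptrans.
- by move=> x xP; apply/supported_ptrans; rewrite ptrans_eltK.
Qed.

Lemma ptrans_elt_eq0 (x : brauer_elt R m) : ptrans_elt r x = 0 -> x = 0.
Proof. by rewrite -{2}[x](ptrans_eltK r) => ->; apply/ffunP => d; rewrite !ffunE. Qed.

Lemma faithful_ptrans :
  (forall x : brauer_elt R m, ann n (walled r) x -> x = 0) <->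
  (forall x : brauer_elt R m, ann n (@perm_diagram m) x -> x = 0).
Proof.
split=> faithful x ann_x; apply: ptrans_elt_eq0; apply: faithful.
  by apply/ann_ptrans; rewrite ptrans_eltK.
exact/ann_ptrans.
Qed.

End Transfer.

Theorem theorem1p1 (R : comNzRingType) (n r s : nat) (hn : (0 < n)%N) :
  (@sigma_surj R (r + s) n r (@walled (r + s) r)
     <-> @sigma_surj R (r + s) n (r + s) (@perm_diagram (r + s))) /\
  ((forall x : brauer_elt R (r + s), @ann R (r + s) n (@walled (r + s) r) x -> x = 0%R)
     <-> (r + s <= n)%N) /\
  ((exists k, @free_of_rank R (diagram (r + s)) (@ann R (r + s) n (@walled (r + s) r)) k)
     <-> (exists k, @free_of_rank R (diagram (r + s)) (@ann R (r + s) n (@perm_diagram (r + s))) k)) /\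
  (forall k1 k2,
     @free_of_rank R (diagram (r + s)) (@ann R (r + s) n (@walled (r + s) r)) k1 ->
     @free_of_rank R (diagram (r + s)) (@ann R (r + s) n (@perm_diagram (r + s))) k2 -> k1 = k2).
Proof.
have free_ptrans k : free_of_rank (@ann R _ n (@walled (r + s) r)) k <->
                     free_of_rank (@ann R _ n (@perm_diagram (r + s))) k.
  exact: free_of_rank_comp k (@ptransK _ r) (@ann_ptrans _ r n R).
split; first exact: sigma_surj_ptrans.
split; first exact: iff_trans (faithful_ptrans _ _ _ _) (perm_faithfulP _ _ _).
split; first by split=> -[k /free_ptrans free_k]; exists k.
move=> k1 k2 /free_ptrans free1 free2.
by apply/eqP; rewrite eqn_leq !(free_of_rank_le free1 free2, free_of_rank_le free2 free1).
Qed.
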